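(* Let $N\ge 3$ and $0<\gamma_1\le\dots\le\gamma_N$. There exists a sum-rate optimal spanning tree $T$ on $\{1,\dots,N\}$ in which vertices $N$ and $N-1$ both have degree $1$ and, writing $i$ for the unique neighbor of $N$ and $j$ for the unique neighbor of $N-1$, one has $\gamma_i\ge\gamma_j$.
   Context: For distinct $i,j$ put $\varphi(i,j)=\log_2\!\big(\gamma_i+\frac{\gamma_i}{\gamma_i+\gamma_j}\big)$. For a spanning tree $T$ on $\{1,\dots,N\}$ with neighbor sets $A_i^T$, define $R_{\mathrm s}(T)=\frac{1}{2(N-1)}\sum_{i=1}^N \min_{j\in A_i^T}\varphi(i,j)$. A spanning tree is called sum-rate optimal if it maximizes $R_{\mathrm s}$ over all spanning trees on $\{1,\dots,N\}$. *)

From Stdlib Require Import Reals Lra Lia List Arith Relations.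
Import ListNotations.
Open Scope R_scope.

Definition log2 (x : R) : R := ln x / ln 2.

Definition phi (gamma : nat -> R) (i j : nat) : R :=
  log2 (gamma i + gamma i / (gamma i + gamma j)).

(* A graph on the vertex set {1,...,N} is given by a boolean adjacency relation
   E : nat -> nat -> bool (simple, undirected, supported on {1..N}). *)
Definition in_range (N v : nat) : Prop := (1 <= v <= N)%nat.

Definition simple_graph_on (N : nat) (E : nat -> nat -> bool) : Prop :=
  (forall u v, E u v = E v u) /\
  (forall u, E u u = false) /\
  (forall u v, E u v = true -> in_range N u /\ in_range N v).

Definition connected_on (N : nat) (E : nat -> nat -> bool) : Prop :=
  forall u v, in_range N u -> in_range N v ->
    clos_refl_trans nat (fun a b => E a b = true) u v.

Fixpoint walk (E : nat -> nat -> bool) (l : list nat) : Prop :=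
  match l with
  | x :: ((y :: _) as t) => E x y = true /\ walk E t
  | _ => True
  end.

Definition has_cycle (E : nat -> nat -> bool) : Prop :=
  exists (x : nat) (c : list nat),
    NoDup (x :: c) /\ (2 <= length c)%nat /\ walk E (x :: c ++ [x]).

Definition spanning_tree (N : nat) (E : nat -> nat -> bool) : Prop :=
  simple_graph_on N E /\ connected_on N E /\ ~ has_cycle E.

Definition neighbors (N : nat) (E : nat -> nat -> bool) (i : nat) : list nat :=
  filter (E i) (seq 1 N).

Definition degree (N : nat) (E : nat -> nat -> bool) (i : nat) : nat :=
  length (neighbors N E i).

(* minimum of a (nonempty) list of reals; 0 for the empty list (never used
   for spanning trees with N >= 2) *)
Definition min_list (l : list R) : R :=
  match l with
  | nil => 0
  | x :: xs => fold_right Rmin x xs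
  end.

Definition sum_rate (N : nat) (gamma : nat -> R) (E : nat -> nat -> bool) : R :=
  / (2 * (INR N - 1)) *
  fold_right Rplus 0
    (map (fun i => min_list (map (phi gamma i) (neighbors N E i))) (seq 1 N)).

Definition sum_rate_optimal (N : nat) (gamma : nat -> R) (E : nat -> nat -> bool) : Prop :=
  spanning_tree N E /\
  forall E', spanning_tree N E' -> sum_rate N gamma E' <= sum_rate N gamma E.

From Stdlib Require Import Reals List Lra Lia Permutation Classical
  FunctionalExtensionality Relations FinFun Btauto.
Import ListNotations.
Open Scope R_scope.

(* With K s = ln (1 + 1/s) we have phi(v,u) = log2 gamma_v + K (gamma_v + gamma_u) / ln 2,
   which decreases in gamma_u.  Re-hanging every other neighbour
   of N on one of them, a, makes N a leaf and lowers no vertex's minimum, because gamma_N is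
   maximal; if a <> N-1, the same move makes N-1 a leaf.  If a = N-1, re-hang N and N-1
   together on another neighbour b of N-1: only N-1 and b can lose, and their combined loss is
   at most (K (gamma_(N-1) + gamma_N) - K (gamma_b + gamma_N)) / ln 2 <= 0.  Finally, if the
   neighbours i of N and j of N-1 have gamma_i < gamma_j, swap the labels N and N-1: only
   N, N-1, i, j change, and their combined loss is at most 2/ln 2 times
   K(N+i) + K(N-1+j) - K(N+j) - K(N-1+i) <= 0 (indices standing for their gammas), the
   logarithm of (1 + 1/(z+x)) (1 + 1/(y+w)) <= (1 + 1/(z+w)) (1 + 1/(y+x)) for x <= w, y <= z. *)

Lemma walk_app (E : nat -> nat -> bool) l1 y l2 :
  walk E (l1 ++ y :: l2) <-> walk E (l1 ++ [y]) /\ walk E (y :: l2).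
Proof.
  induction l1 as [|x l1 IH]; simpl.
  - tauto.
  - destruct l1 as [|z l1]; simpl in *.
    + tauto.
    + rewrite IH. tauto.
Qed.

Lemma walk_snoc2 (E : nat -> nat -> bool) l x y z :
  walk E (l ++ [x]) -> E x y = true -> E y z = true -> walk E (l ++ [x; y; z]).
Proof. intros Hl Hxy Hyz. apply walk_app. simpl. tauto. Qed.

Lemma walk_snoc (E : nat -> nat -> bool) l x y :
  walk E (l ++ [x]) -> E x y = true -> walk E (l ++ [x; y]).
Proof. intros Hl Hxy. apply walk_app. simpl. tauto. Qed.

Lemma walk_subrel (E E' : nat -> nat -> bool) l :
  (forall u v, In u l -> In v l -> E' u v = true -> E u v = true) ->
  walk E' l -> walk E l.
Proof.
  induction l as [|x l IH]; simpl; auto.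
  destruct l as [|y l]; auto.
  intros H [H1 H2]. split.
  - apply H; simpl; auto.
  - apply IH; [|exact H2]. intros u v Hu Hv. apply H; simpl in *; auto.
Qed.

Lemma walk_map (E : nat -> nat -> bool) (s : nat -> nat) l :
  walk (fun u v => E (s u) (s v)) l -> walk E (map s l).
Proof.
  induction l as [|x l IH]; simpl; auto.
  destruct l as [|y l]; simpl; auto.
  intros [H1 H2]. split; auto. apply IH. exact H2.
Qed.

Lemma cycle_rotate (E : nat -> nat -> bool) x c y :
  NoDup (x :: c) -> walk E (x :: c ++ [x]) -> In y c ->
  exists c', NoDup (y :: c') /\ length c' = length c /\ walk E (y :: c' ++ [y]) /\
    (forall z, In z (y :: c') <-> In z (x :: c)).
Proof.
  intros Hnd Hw Hy.
  destruct (in_split _ _ Hy) as [c1 [c2 ->]].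
  exists (c2 ++ x :: c1).
  assert (Hp : Permutation (x :: c1 ++ y :: c2) (y :: c2 ++ x :: c1)).
  { change (Permutation ((x :: c1) ++ (y :: c2)) ((y :: c2) ++ (x :: c1))).
    apply Permutation_app_comm. }
  split; [|split; [|split]].
  - eapply Permutation_NoDup; eauto.
  - rewrite !length_app; simpl; lia.
  - assert (H1 : walk E ((x :: c1) ++ y :: (c2 ++ [x]))).
    { simpl. rewrite <- app_assoc in Hw. exact Hw. }
    apply walk_app in H1. destruct H1 as [Ha Hb].
    rewrite <- app_assoc.
    apply (walk_app E (y :: c2) x (c1 ++ [y])). split; auto.
  - intro z. split; intro Hz.
    + eapply Permutation_in; [apply Permutation_sym; exact Hp | exact Hz].
    + eapply Permutation_in; [exact Hp | exact Hz].
Qed.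

Lemma cycle_rotate_to (E : nat -> nat -> bool) x c y :
  NoDup (x :: c) -> (2 <= length c)%nat -> walk E (x :: c ++ [x]) -> In y (x :: c) ->
  exists c', NoDup (y :: c') /\ (2 <= length c')%nat /\ walk E (y :: c' ++ [y]) /\
    (forall z, In z (y :: c') <-> In z (x :: c)).
Proof.
  intros Hnd Hlen Hw [<-|Hy].
  - exists c. repeat split; auto.
  - destruct (cycle_rotate E x c y Hnd Hw Hy) as [c' (H1 & H2 & H3 & H4)].
    exists c'. repeat split; auto; try lia; apply H4.
Qed.

(* The two neighbours of [w] on the cycle would both have to be [a]. *)
Lemma cycle_avoids_leaf (E : nat -> nat -> bool) w a x c :
  (forall u v, E u v = E v u) -> (forall y, E w y = true -> y = a) ->
  NoDup (x :: c) -> (2 <= length c)%nat -> walk E (x :: c ++ [x]) -> ~ In w (x :: c).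
Proof.
  intros Hs Hl Hnd Hlen Hw Hin.
  destruct (cycle_rotate_to E x c w Hnd Hlen Hw Hin) as [[|c1 d] (Hnd' & Hlen' & Hw' & _)];
    simpl in Hlen'; [lia|].
  assert (Hd : d <> []) by (destruct d; simpl in *; [lia|discriminate]).
  destruct (exists_last Hd) as [d' [ck ->]].
  simpl in Hw'. destruct Hw' as [H1 Hw'].
  rewrite <- app_assoc in Hw'. simpl in Hw'.
  apply (walk_app E (c1 :: d') ck [w]) in Hw'. destruct Hw' as [_ [H2 _]].
  apply Hl in H1. rewrite Hs in H2. apply Hl in H2. subst.
  inversion Hnd' as [|? ? _ Hn]; subst. inversion Hn as [|? ? Hn' _]; subst.
  apply Hn', in_or_app. right; simpl; auto.
Qed.

Lemma reach_sym (E : nat -> nat -> bool) u v :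
  (forall a b, E a b = E b a) ->
  clos_refl_trans nat (fun a b => E a b = true) u v ->
  clos_refl_trans nat (fun a b => E a b = true) v u.
Proof.
  intros Hs H. induction H.
  - apply rt_step. rewrite Hs; auto.
  - apply rt_refl.
  - eapply rt_trans; eauto.
Qed.

Lemma reach_map (E E' : nat -> nat -> bool) (h : nat -> nat) u v :
  (forall a b, E a b = true -> h a = h b \/ E' (h a) (h b) = true) ->
  clos_refl_trans nat (fun a b => E a b = true) u v ->
  clos_refl_trans nat (fun a b => E' a b = true) (h u) (h v).
Proof.
  intros Hm H. induction H.
  - destruct (Hm _ _ H) as [->|H']; [apply rt_refl | apply rt_step; auto].
  - apply rt_refl.
  - eapply rt_trans; eauto.
Qed.

Lemma reach_invariant (E : nat -> nat -> bool) (P : nat -> Prop) u v :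
  (forall a b, P a -> E a b = true -> P b) -> P u ->
  clos_refl_trans nat (fun a b => E a b = true) u v -> P v.
Proof. intros Hc Hu H. induction H; eauto. Qed.

Lemma connected_via_hub N (E : nat -> nat -> bool) c :
  (forall a b, E a b = E b a) ->
  (forall u, in_range N u -> clos_refl_trans nat (fun a b => E a b = true) u c) ->
  connected_on N E.
Proof.
  intros Hs H u v Hu Hv. eapply rt_trans; [apply H; auto | apply reach_sym; auto].
Qed.

Lemma tree_neighbor N E v : (2 <= N)%nat -> spanning_tree N E -> in_range N v ->
  exists y, E v y = true /\ in_range N y.
Proof.
  intros HN [[Hs [Hi Hr]] [Hc _]] Hv.
  assert (Hu : exists u, in_range N u /\ u <> v).
  { unfold in_range in *. destruct (Nat.eqb_spec v 1); [exists 2%nat | exists 1%nat]; lia. }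
  destruct Hu as [u [Hu Huv]].
  specialize (Hc v u Hv Hu). apply clos_rt_rt1n in Hc.
  inversion Hc; subst; [congruence|].
  match goal with H : E v ?y = true |- _ => exists y; split; [exact H | apply (Hr _ _ H)] end.
Qed.

Definition leaf_at (E : nat -> nat -> bool) (v a : nat) : Prop :=
  forall x, E v x = true <-> x = a.

Lemma leaf_nonadjacent (E : nat -> nat -> bool) p q v :
  (forall u v, E u v = E v u) -> leaf_at E p q -> v <> q -> E v p = false.
Proof.
  intros Hs Hpq Hvq. destruct (E v p) eqn:H; auto. rewrite Hs in H. apply Hpq in H. congruence.
Qed.

Lemma leaf_anchor_other_neighbor N E p q : (3 <= N)%nat -> spanning_tree N E ->
  in_range N p -> leaf_at E p q -> exists b, E q b = true /\ b <> p.
Proof.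
  intros HN [[Hs [Hirr Hr]] [Hc _]] Hp Hpq.
  apply NNPP. intro Hno.
  assert (Hq : in_range N q) by (apply (Hr p q), Hpq; reflexivity).
  assert (Hout : exists r, in_range N r /\ r <> p /\ r <> q).
  { unfold in_range in *.
    destruct (Nat.eq_dec p 1), (Nat.eq_dec q 1), (Nat.eq_dec p 2), (Nat.eq_dec q 2);
      first [exists 1%nat; lia | exists 2%nat; lia | exists 3%nat; lia]. }
  destruct Hout as [r (Hr' & Hrp & Hrq)].
  assert (Hcl : r = p \/ r = q).
  { apply (reach_invariant E (fun x => x = p \/ x = q) p r); [|auto|apply Hc; auto].
    intros x y [-> | ->] Hxy.
    - right. apply Hpq; auto.
    - destruct (Nat.eq_dec y p); auto. exfalso; eauto. }
  tauto.
Qed.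

Lemma min_list_le l y : In y l -> min_list l <= y.
Proof.
  destruct l as [|x xs]; simpl; [tauto|].
  assert (H : fold_right Rmin x xs <= x /\ forall y, In y xs -> fold_right Rmin x xs <= y).
  { induction xs as [|z xs [IH1 IH2]]; simpl; [split; [lra | tauto]|].
    split; [eapply Rle_trans; [apply Rmin_r | auto]|].
    intros y' [<-|Hy]; [apply Rmin_l | eapply Rle_trans; [apply Rmin_r | auto]]. }
  intros [<-|Hy]; [apply (proj1 H) | apply (proj2 H), Hy].
Qed.

Lemma min_list_in l : l <> [] -> In (min_list l) l.
Proof.
  destruct l as [|x xs]; [congruence|]. intros _. simpl.
  induction xs as [|z xs IH]; simpl; auto.
  destruct (Rle_dec z (fold_right Rmin x xs)) as [Hle|Hgt].
  - rewrite Rmin_left by exact Hle. auto.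
  - rewrite Rmin_right by lra. destruct IH; auto.
Qed.

Definition sumL (f : nat -> R) (l : list nat) : R := fold_right Rplus 0 (map f l).

Lemma sumL_le f g l : (forall v, In v l -> f v <= g v) -> sumL f l <= sumL g l.
Proof.
  induction l as [|x l IH]; unfold sumL; simpl; intros H; [lra|].
  apply Rplus_le_compat; [apply H; simpl; auto | apply IH; intros; apply H; simpl; auto].
Qed.

Lemma sumL_plus f g l : sumL (fun v => f v + g v) l = sumL f l + sumL g l.
Proof. induction l as [|x l IH]; unfold sumL in *; simpl; [lra|]. rewrite IH; lra. Qed.

Lemma sumL_single_notin k c l :
  ~ In k l -> sumL (fun v => if Nat.eqb k v then c else 0) l = 0.
Proof.
  induction l as [|x l IH]; unfold sumL in *; simpl; intros H; [reflexivity|].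
  destruct (Nat.eqb_spec k x); [subst; tauto|]. rewrite IH by tauto. lra.
Qed.

Lemma sumL_single k c l :
  NoDup l -> In k l -> sumL (fun v => if Nat.eqb k v then c else 0) l = c.
Proof.
  induction l as [|x l IH]; simpl; [tauto|]. intros Hnd Hin.
  inversion Hnd as [|? ? Hx Hl]; subst.
  change (sumL _ (x :: l)) with
    ((if Nat.eqb k x then c else 0) + sumL (fun v => if Nat.eqb k v then c else 0) l).
  destruct (Nat.eqb_spec k x) as [<-|Hkx].
  - rewrite (sumL_single_notin k c l Hx). lra.
  - destruct Hin as [->|Hin]; [tauto|]. rewrite IH; auto. lra.
Qed.

(* [w] keeps [a] as its only neighbour; every other neighbour of [w] is re-hung on [a]. *)
Definition reattach (w a : nat) (E : nat -> nat -> bool) : nat -> nat -> bool :=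
  fun u v =>
    if Nat.eqb u w then Nat.eqb v a
    else if Nat.eqb v w then Nat.eqb u a
    else (negb (Nat.eqb u v) && (E u v || (Nat.eqb u a && E w v) || (Nat.eqb v a && E u w)))%bool.

Ltac case_eqb := repeat match goal with
  | |- context [Nat.eqb ?x ?y] => destruct (Nat.eqb_spec x y)
  | H : context [Nat.eqb ?x ?y] |- _ => destruct (Nat.eqb_spec x y)
  end.

Section Reattach.
Variables (w a : nat) (E : nat -> nat -> bool).
Hypothesis Hsym : forall u v, E u v = E v u.
Hypothesis Hwa : E w a = true.
Hypothesis Hirr : forall u, E u u = false.

Lemma anchor_neq_leaf : a <> w.
Proof. intros ->. congruence. Qed.

Lemma reattach_edge u v : reattach w a E u v = true ->
  (u = w /\ v = a) \/ (v = w /\ u = a) \/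
  (u <> w /\ v <> w /\ u <> v /\
   (E u v = true \/ (u = a /\ E w v = true) \/ (v = a /\ E u w = true))).
Proof.
  unfold reattach. intros H. case_eqb; subst; simpl in H; try discriminate; try tauto;
  repeat match type of H with context [E ?x ?y] => let e := fresh "e" in destruct (E x y) eqn:e end;
  simpl in H; try discriminate; right; right; tauto.
Qed.

Lemma reattach_sym u v : reattach w a E u v = reattach w a E v u.
Proof.
  unfold reattach. case_eqb; subst; simpl; auto; try congruence.
  - rewrite (Hsym a), (Hsym w). destruct (E v a), (E v w); reflexivity.
  - rewrite (Hsym a), (Hsym w). destruct (E u a), (E u w); reflexivity.
Qed.

Lemma reattach_leaf : leaf_at (reattach w a E) w a.
Proof. intro x. unfold reattach. rewrite Nat.eqb_refl. apply Nat.eqb_eq. Qed.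

Lemma reattach_away u v : u <> w -> v <> w -> u <> a -> v <> a ->
  reattach w a E u v = true -> E u v = true.
Proof. intros Huw Hvw Hua Hva H. apply reattach_edge in H. intuition. Qed.

Lemma reattach_anchor_edge v : v <> w -> v <> a ->
  reattach w a E a v = true -> E a v = true \/ E w v = true.
Proof. intros Hvw Hva H. apply reattach_edge in H. intuition. Qed.

Lemma reattach_keeps_leaf p q : p <> w -> q <> w -> p <> a ->
  leaf_at E p q -> leaf_at (reattach w a E) p q.
Proof.
  intros Hpw Hqw Hpa Hpq x. split; intro H.
  - apply reattach_edge in H.
    destruct H as [[? _]|[[-> ?]|(_ & _ & _ & [H|[[? _]|[-> H]]])]]; try congruence.
    + apply Hpq; auto.
    + apply Hpq in H. congruence.
  - subst x. assert (Hq : E p q = true) by (apply Hpq; reflexivity).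
    assert (p <> q) by (intros ->; congruence).
    unfold reattach. case_eqb; try congruence; rewrite Hq; btauto.
Qed.

Lemma reattach_moves_leaf p : p <> w -> p <> a ->
  leaf_at E p w -> leaf_at (reattach w a E) p a.
Proof.
  intros Hpw Hpa Hp x. pose proof anchor_neq_leaf as Haw.
  assert (Hpw' : E p w = true) by (apply Hp; reflexivity).
  split; intro H.
  - apply reattach_edge in H.
    destruct H as [[? _]|[[_ ?]|(_ & ? & _ & [H|[[? _]|[? _]]])]]; try congruence.
    apply Hp in H. congruence.
  - subst x. unfold reattach. case_eqb; try congruence. rewrite Hpw'. btauto.
Qed.

Lemma reattach_simple N : simple_graph_on N E -> simple_graph_on N (reattach w a E).
Proof.
  intros [_ [_ Hr]]. destruct (Hr _ _ Hwa) as [Hw Ha].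
  split; [exact reattach_sym | split].
  - intro u. unfold reattach. case_eqb; subst; simpl; auto; congruence.
  - intros u v H. apply reattach_edge in H.
    destruct H as [[-> ->]|[[-> ->]|(_ & _ & _ & [H|[[-> H]|[-> H]]])]]; auto;
      pose proof (Hr _ _ H); tauto.
Qed.

Lemma reattach_connected N : simple_graph_on N E -> connected_on N E ->
  connected_on N (reattach w a E).
Proof.
  intros [_ [_ Hr]] Hc. destruct (Hr _ _ Hwa) as [Hw Ha]. pose proof anchor_neq_leaf.
  apply connected_via_hub with (c := a); [exact reattach_sym|].
  intros u Hu. destruct (Nat.eq_dec u w) as [->|Huw].
  - apply rt_step, reattach_leaf. reflexivity.
  - (* collapsing [w] onto [a] maps each edge of [E] to an edge or a loop *)
    set (h := fun x => if Nat.eqb x w then a else x).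
    assert (Hh : forall x, x <> w -> h x = x) by (intros x Hx; unfold h; case_eqb; congruence).
    assert (Hstep : forall x y, E x y = true -> h x = h y \/ reattach w a E (h x) (h y) = true).
    { intros x y Hxy. unfold h, reattach. case_eqb; subst; auto; try congruence.
      all: right; simpl; rewrite Hxy; btauto. }
    pose proof (reach_map E (reattach w a E) h u a Hstep (Hc u a Hu Ha)) as Hm.
    rewrite (Hh u Huw), (Hh a) in Hm; auto.
Qed.

(* The path closes through [a], through [w], or through the edge [w a]. *)
Lemma cycle_from_path c1 m ck :
  NoDup (a :: c1 :: m ++ [ck]) -> ~ In w (a :: c1 :: m ++ [ck]) ->
  walk E (c1 :: m ++ [ck]) ->
  E a c1 = true \/ E w c1 = true -> E ck a = true \/ E ck w = true ->
  has_cycle E.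
Proof.
  intros Hnd Hnw HL HA HB.
  assert (Hlen : (2 <= length (c1 :: m ++ [ck]))%nat) by (simpl; rewrite length_app; simpl; lia).
  assert (Hw : ~ In w (c1 :: m ++ [ck])) by (intro; apply Hnw; right; auto).
  assert (Hwa' : w <> a) by (intros ->; apply Hnw; left; auto).
  assert (HL' : walk E ((c1 :: m) ++ [ck])) by exact HL.
  destruct HA as [HA|HA], HB as [HB|HB].
  - exists a, (c1 :: m ++ [ck]). split; [exact Hnd | split; [exact Hlen |]].
    simpl. split; auto. rewrite <- app_assoc. apply (walk_snoc E (c1 :: m)); auto.
  - exists a, (c1 :: m ++ [ck; w]). split; [| split].
    + apply Permutation_NoDup with (l := w :: a :: c1 :: m ++ [ck]); [|constructor; tauto].
      replace (a :: c1 :: m ++ [ck; w]) with ((a :: c1 :: m ++ [ck]) ++ [w])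
        by (simpl; rewrite <- app_assoc; reflexivity).
      apply Permutation_cons_append.
    + simpl. rewrite length_app. simpl. lia.
    + simpl. split; auto. rewrite <- app_assoc.
      apply (walk_snoc2 E (c1 :: m)); auto.
  - exists a, (w :: c1 :: m ++ [ck]). split; [| split].
    + inversion Hnd. constructor; [simpl in *; intuition congruence|].
      constructor; simpl in *; tauto.
    + simpl; lia.
    + simpl. rewrite Hsym. split; auto. split; auto.
      rewrite <- app_assoc. apply (walk_snoc E (c1 :: m)); auto.
  - exists w, (c1 :: m ++ [ck]). split; [| split; [exact Hlen|]].
    + inversion Hnd. constructor; tauto.
    + simpl. split; auto. rewrite <- app_assoc. apply (walk_snoc E (c1 :: m)); auto.
Qed.

Lemma reattach_acyclic : ~ has_cycle E -> ~ has_cycle (reattach w a E).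
Proof.
  intros Hcy [x [c (Hnd & Hlen & Hwk)]].
  pose proof anchor_neq_leaf.
  assert (Hnw := cycle_avoids_leaf _ w a x c reattach_sym
                   (fun y Hy => proj1 (reattach_leaf y) Hy) Hnd Hlen Hwk).
  destruct (classic (In a (x :: c))) as [Hain|Hanin].
  2:{ apply Hcy. exists x, c. repeat split; auto.
      apply walk_subrel with (reattach w a E); auto.
      intros u v Hu Hv. assert (Hc : forall z, In z (x :: c ++ [x]) -> In z (x :: c)).
      { intros z [<-|Hz]; [left; auto|]. apply in_app_or in Hz. simpl in *. tauto. }
      apply Hc in Hu, Hv. apply reattach_away; congruence. }
  destruct (cycle_rotate_to _ x c a Hnd Hlen Hwk Hain) as [c' (Hnd' & Hlen' & Hwk' & Hsame)].
  assert (Hnw' : ~ In w (a :: c')) by (rewrite Hsame; exact Hnw).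
  clear x c Hnd Hlen Hwk Hnw Hain Hsame.
  destruct c' as [|c1 d]; simpl in Hlen'; [lia|].
  assert (Hd : d <> []) by (destruct d; simpl in *; [lia|discriminate]).
  destruct (exists_last Hd) as [m [ck ->]]. clear Hd.
  simpl in Hwk'. destruct Hwk' as [H1 Hwk'].
  rewrite <- app_assoc in Hwk'. simpl in Hwk'.
  apply (walk_app _ (c1 :: m) ck [a]) in Hwk'. destruct Hwk' as [Hin [H2 _]].
  assert (Hout : forall z, In z (c1 :: m ++ [ck]) -> z <> a /\ z <> w).
  { intros z Hz. inversion Hnd'. split; intros ->; simpl in *; tauto. }
  apply Hcy, (cycle_from_path c1 m ck); auto.
  - apply walk_subrel with (reattach w a E); [|exact Hin].
    intros u v Hu Hv. destruct (Hout u Hu), (Hout v Hv). apply reattach_away; auto.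
  - destruct (Hout c1) as [Hc1a Hc1w]; [simpl; auto|].
    apply reattach_anchor_edge; auto.
  - destruct (Hout ck) as [Hcka Hckw]; [simpl; right; apply in_or_app; simpl; auto|].
    rewrite reattach_sym in H2. rewrite !(Hsym ck). apply reattach_anchor_edge; auto.
Qed.

End Reattach.

Lemma reattach_spanning_tree N w a E :
  spanning_tree N E -> E w a = true -> spanning_tree N (reattach w a E).
Proof.
  intros [HsE [Hc Hcy]] Hwa. pose proof HsE as [Hs [Hi _]].
  split; [|split].
  - apply reattach_simple; auto.
  - apply reattach_connected; auto.
  - apply reattach_acyclic; auto.
Qed.

Definition transpose (p q v : nat) : nat :=
  if Nat.eqb v p then q else if Nat.eqb v q then p else v.

Lemma transpose_l p q : transpose p q p = q.
Proof. unfold transpose. rewrite Nat.eqb_refl. reflexivity. Qed.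

Lemma transpose_r p q : transpose p q q = p.
Proof. unfold transpose. case_eqb; congruence. Qed.

Lemma transpose_other p q v : v <> p -> v <> q -> transpose p q v = v.
Proof. intros. unfold transpose. case_eqb; congruence. Qed.

Lemma transpose_involutive p q v : transpose p q (transpose p q v) = v.
Proof. unfold transpose. case_eqb; congruence. Qed.

Lemma transpose_in_range N p q v : in_range N p -> in_range N q -> in_range N v ->
  in_range N (transpose p q v).
Proof. intros. unfold transpose. case_eqb; auto. Qed.

Definition relabel (s : nat -> nat) (E : nat -> nat -> bool) : nat -> nat -> bool :=
  fun u v => E (s u) (s v).

Lemma relabel_spanning_tree N (E : nat -> nat -> bool) (s : nat -> nat) :
  (forall v, s (s v) = v) -> (forall v, in_range N v -> in_range N (s v)) ->
  spanning_tree N E -> spanning_tree N (relabel s E).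
Proof.
  unfold relabel. intros Hss Hsr [[Hs [Hi Hr]] [Hc Hcy]].
  split; [split; [|split]|split].
  - intros; apply Hs.
  - intros; apply Hi.
  - intros u v H. destruct (Hr _ _ H) as [H1 H2].
    rewrite <- (Hss u), <- (Hss v). split; apply Hsr; auto.
  - intros u v Hu Hv. rewrite <- (Hss u), <- (Hss v).
    apply reach_map with (E := E); [intros a b H; right; rewrite !Hss; auto|].
    apply Hc; apply Hsr; auto.
  - intros [x [c (Hnd & Hlen & Hwk)]]. apply Hcy.
    exists (s x), (map s c). split; [|split].
    + change (s x :: map s c) with (map s (x :: c)). apply Injective_map_NoDup; auto.
      intros a b H. rewrite <- (Hss a), <- (Hss b), H; auto.
    + rewrite length_map; auto.
    + apply walk_map in Hwk. simpl in Hwk. rewrite map_app in Hwk. exact Hwk.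
Qed.

Lemma transpose_row_away p q (E : nat -> nat -> bool) v x : v <> p -> v <> q ->
  E v p = false -> E v q = false -> relabel (transpose p q) E v x = E v x.
Proof.
  intros Hvp Hvq Hp Hq. unfold relabel. rewrite (transpose_other p q v) by auto.
  destruct (Nat.eq_dec x p) as [->|Hxp]; [rewrite transpose_l; congruence|].
  destruct (Nat.eq_dec x q) as [->|Hxq]; [rewrite transpose_r; congruence|].
  rewrite transpose_other; auto.
Qed.

Lemma relabel_leaf (s : nat -> nat) E p p' q : (forall v, s (s v) = v) -> s p' = p -> s q = q ->
  leaf_at E p q -> leaf_at (relabel s E) p' q.
Proof.
  intros Hss Hp Hq H x. unfold relabel. rewrite Hp, (H (s x)). split; intro Hx.
  - rewrite <- (Hss x), Hx. exact Hq.
  - subst. exact Hq.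
Qed.

Definition star (N : nat) : nat -> nat -> bool := fun u v =>
  ((Nat.eqb u 1 && Nat.leb 2 v && Nat.leb v N) || (Nat.eqb v 1 && Nat.leb 2 u && Nat.leb u N))%bool.

Lemma star_edge N u v : star N u v = true <->
  (u = 1%nat /\ 2 <= v <= N \/ v = 1%nat /\ 2 <= u <= N)%nat.
Proof.
  unfold star. rewrite Bool.orb_true_iff, !Bool.andb_true_iff, !Nat.eqb_eq, !Nat.leb_le. tauto.
Qed.

Lemma star_spanning_tree N : (2 <= N)%nat -> spanning_tree N (star N).
Proof.
  intros HN.
  assert (Hs : forall u v, star N u v = star N v u) by (intros; unfold star; apply Bool.orb_comm).
  split; [split; [|split]|split].
  - exact Hs.
  - intro u. destruct (star N u u) eqn:E; auto. apply star_edge in E. lia.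
  - intros u v H. apply star_edge in H. unfold in_range. lia.
  - apply connected_via_hub with (c := 1%nat); auto. intros u Hu.
    destruct (Nat.eq_dec u 1) as [->|Hu1]; [apply rt_refl|].
    apply rt_step, star_edge. unfold in_range in Hu. lia.
  - intros [x [c (Hnd & Hlen & Hwk)]].
    assert (Hhub : In 1%nat (x :: c)).
    { destruct c as [|c1 d]; simpl in Hlen; [lia|]. destruct Hwk as [H _].
      apply star_edge in H. destruct H as [[-> _]|[-> _]]; simpl; auto. }
    destruct (cycle_rotate_to _ x c 1%nat Hnd Hlen Hwk Hhub)
      as [[|c1 [|c2 d]] (H1 & H2 & H3 & _)]; simpl in H2; try lia.
    destruct H3 as [_ [H3 _]]. apply star_edge in H3.
    inversion H1 as [|? ? H4]; subst.
    assert (c1 <> 1%nat /\ c2 <> 1%nat) by (split; intro; subst; apply H4; simpl; auto).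
    lia.
Qed.

Fixpoint relations_on (ps : list (nat * nat)) : list (nat -> nat -> bool) :=
  match ps with
  | [] => [fun _ _ => false]
  | p :: ps' =>
      relations_on ps' ++ map (fun f => fun u v =>
        if (Nat.eqb u (fst p) && Nat.eqb v (snd p))%bool then true else f u v) (relations_on ps')
  end.

Lemma relations_on_complete ps (E : nat -> nat -> bool) :
  (forall u v, E u v = true -> In (u, v) ps) -> In E (relations_on ps).
Proof.
  revert E. induction ps as [|[p1 p2] ps IH]; intros E HE.
  - left. apply functional_extensionality; intro u; apply functional_extensionality; intro v.
    destruct (E u v) eqn:H; auto. destruct (HE _ _ H).
  - set (E0 := fun u v => if (Nat.eqb u p1 && Nat.eqb v p2)%bool then false else E u v).
    assert (HE0 : In E0 (relations_on ps)).
    { apply IH. intros u v H. unfold E0 in H.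
      destruct (Nat.eqb_spec u p1), (Nat.eqb_spec v p2); simpl in H; try discriminate;
      apply HE in H; destruct H as [H|H]; auto; inversion H; subst; tauto. }
    simpl. apply in_or_app. destruct (E p1 p2) eqn:Hp; [right|left].
    + replace E with (fun u v => if (Nat.eqb u p1 && Nat.eqb v p2)%bool then true else E0 u v).
      { apply in_map with (f := fun f => fun u v =>
          if (Nat.eqb u p1 && Nat.eqb v p2)%bool then true else f u v). auto. }
      apply functional_extensionality; intro u; apply functional_extensionality; intro v.
      unfold E0. destruct (Nat.eqb_spec u p1), (Nat.eqb_spec v p2); simpl; subst; auto.
    + replace E with E0; auto.
      apply functional_extensionality; intro u; apply functional_extensionality; intro v.
      unfold E0. destruct (Nat.eqb_spec u p1), (Nat.eqb_spec v p2); simpl; subst; auto.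
Qed.

Lemma list_argmax {A : Type} (L : list A) (P : A -> Prop) (f : A -> R) :
  (exists x, In x L /\ P x) ->
  exists x, P x /\ forall y, In y L -> P y -> f y <= f x.
Proof.
  induction L as [|x0 L IH]; intros [x [Hx HP]]; [destruct Hx|].
  destruct (classic (exists x, In x L /\ P x)) as [Hex|Hnex].
  - destruct (IH Hex) as [m [Hm Hmax]].
    destruct (classic (P x0 /\ f m < f x0)) as [[HP0 Hlt]|Hn].
    + exists x0. split; auto. intros y [<-|Hy] HPy; [lra|]. specialize (Hmax y Hy HPy). lra.
    + exists m. split; auto. intros y Hy HPy.
      destruct (Rle_dec (f y) (f m)) as [|Hgt]; auto. exfalso.
      destruct Hy as [<-|Hy]; [apply Hn; split; auto; lra | specialize (Hmax y Hy HPy); lra].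
  - assert (P x0) by (destruct Hx as [<-|Hx]; auto; exfalso; apply Hnex; eauto).
    exists x0. split; auto. intros y [<-|Hy] HPy; [lra|]. exfalso; apply Hnex; eauto.
Qed.

Lemma spanning_tree_maximum N (f : (nat -> nat -> bool) -> R) : (2 <= N)%nat ->
  exists E, spanning_tree N E /\ forall E', spanning_tree N E' -> f E' <= f E.
Proof.
  intros HN.
  set (ps := list_prod (seq 1 N) (seq 1 N)).
  assert (Hin : forall E, spanning_tree N E -> In E (relations_on ps)).
  { intros E [[_ [_ Hr]] _]. apply relations_on_complete. intros u v H.
    destruct (Hr _ _ H). apply in_prod; apply in_seq; unfold in_range in *; lia. }
  destruct (list_argmax (relations_on ps) (spanning_tree N) f) as [E [HE Hmax]].
  { exists (star N). split; [apply Hin|]; apply star_spanning_tree; auto. }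
  exists E. split; auto.
Qed.

Lemma count_seq_eqb a s n : length (filter (fun x => Nat.eqb x a) (seq s n)) =
  (if (Nat.leb s a && Nat.ltb a (s + n))%bool then 1 else 0)%nat.
Proof.
  revert s. induction n as [|n IH]; intros s; simpl.
  - destruct (Nat.leb_spec s a), (Nat.ltb_spec a (s + 0)); simpl; auto; lia.
  - destruct (Nat.eqb_spec s a); simpl; rewrite IH;
    destruct (Nat.leb_spec (S s) a), (Nat.ltb_spec a (S s + n)), (Nat.leb_spec s a),
      (Nat.ltb_spec a (s + S n)); simpl; auto; lia.
Qed.

Lemma degree_leaf N E v a : in_range N a -> leaf_at E v a -> degree N E v = 1%nat.
Proof.
  intros Ha Hva. unfold degree, neighbors.
  rewrite (filter_ext (E v) (fun x => Nat.eqb x a)), count_seq_eqb.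
  - unfold in_range in Ha. destruct (Nat.leb_spec 1 a), (Nat.ltb_spec a (1 + N)); simpl; lia.
  - intro x. destruct (E v x) eqn:He; symmetry.
    + apply Nat.eqb_eq, Hva; auto.
    + apply Nat.eqb_neq. intro Hx. apply Hva in Hx. congruence.
Qed.

Lemma ln_le_compat x y : 0 < x -> x <= y -> ln x <= ln y.
Proof.
  intros Hx [Hlt| ->]; [left; apply ln_increasing; auto | lra].
Qed.

Definition ln_one_plus_inv (s : R) : R := ln (1 + / s).

Lemma one_plus_inv_pos s : 0 < s -> 0 < 1 + / s.
Proof. intros Hs. assert (0 < / s) by (apply Rinv_0_lt_compat; lra). lra. Qed.

Lemma ln_one_plus_inv_antitone s t : 0 < s -> s <= t -> ln_one_plus_inv t <= ln_one_plus_inv s.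
Proof.
  intros Hs Hst. unfold ln_one_plus_inv. apply ln_le_compat; [apply one_plus_inv_pos; lra|].
  apply Rplus_le_compat_l, Rinv_le_contravar; auto.
Qed.

(* Both products equal 1 + (x + y + z + w + 1) / D for the respective denominators D,
   and (y + x)(z + w) <= (z + x)(y + w) is (z - y)(w - x) >= 0. *)
Lemma one_plus_inv_exchange x w y z : 0 < x -> x <= w -> 0 < y -> y <= z ->
  (1 + / (z + x)) * (1 + / (y + w)) <= (1 + / (z + w)) * (1 + / (y + x)).
Proof.
  intros.
  replace ((1 + / (z + x)) * (1 + / (y + w))) with (1 + (z + x + y + w + 1) / ((z + x) * (y + w)))
    by (field; lra).
  replace ((1 + / (z + w)) * (1 + / (y + x))) with (1 + (z + x + y + w + 1) / ((y + x) * (z + w)))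
    by (field; lra).
  apply Rplus_le_compat_l. unfold Rdiv. apply Rmult_le_compat_l; [lra|].
  apply Rinv_le_contravar; nra.
Qed.

Lemma ln_one_plus_inv_exchange x w y z : 0 < x -> x <= w -> 0 < y -> y <= z ->
  ln_one_plus_inv (z + x) + ln_one_plus_inv (y + w) <=
  ln_one_plus_inv (z + w) + ln_one_plus_inv (y + x).
Proof.
  intros. unfold ln_one_plus_inv.
  rewrite <- !ln_mult by (apply one_plus_inv_pos; lra).
  apply ln_le_compat; [apply Rmult_lt_0_compat; apply one_plus_inv_pos; lra|].
  apply one_plus_inv_exchange; auto.
Qed.

Lemma ln2_pos : 0 < ln 2.
Proof. pose proof ln_lt_2. lra. Qed.

Lemma phi_split g v u : 0 < g v -> 0 < g u ->
  phi g v u = (ln (g v) + ln_one_plus_inv (g v + g u)) / ln 2.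
Proof.
  intros Hv Hu. unfold phi, log2, ln_one_plus_inv. f_equal.
  rewrite <- ln_mult by (auto; apply one_plus_inv_pos; lra).
  f_equal. field. lra.
Qed.

Lemma phi_antitone g v x y : 0 < g v -> 0 < g x -> 0 < g y -> g x <= g y ->
  phi g v y <= phi g v x.
Proof.
  intros. rewrite !phi_split by auto. unfold Rdiv.
  apply Rmult_le_compat_r; [left; apply Rinv_0_lt_compat, ln2_pos|].
  apply Rplus_le_compat_l, ln_one_plus_inv_antitone; lra.
Qed.

Lemma phi_reattach_balance g m n b : 0 < g b -> g b <= g m -> g m <= g n ->
  phi g m n - phi g m b + (phi g b m - phi g b n) <= 0.
Proof.
  intros. rewrite !phi_split by lra.
  rewrite (Rplus_comm (g b) (g m)).
  assert (ln_one_plus_inv (g m + g n) <= ln_one_plus_inv (g b + g n))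
    by (apply ln_one_plus_inv_antitone; lra).
  assert (0 < / ln 2) by (apply Rinv_0_lt_compat, ln2_pos).
  unfold Rdiv. nra.
Qed.

Lemma phi_swap_balance g n m i j : 0 < g i -> g i <= g j -> g j <= g m -> g m <= g n ->
  phi g n i - phi g n j + (phi g m j - phi g m i) + (phi g i n - phi g i m)
  + (phi g j m - phi g j n) <= 0.
Proof.
  intros. rewrite !phi_split by lra.
  rewrite (Rplus_comm (g i) (g n)), (Rplus_comm (g i) (g m)),
          (Rplus_comm (g j) (g m)), (Rplus_comm (g j) (g n)).
  pose proof (ln_one_plus_inv_exchange (g i) (g j) (g m) (g n)) as Hx.
  assert (0 < / ln 2) by (apply Rinv_0_lt_compat, ln2_pos).
  unfold Rdiv. nra.
Qed.

Definition node_rate (N : nat) (g : nat -> R) (E : nat -> nat -> bool) (v : nat) : R :=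
  min_list (map (phi g v) (neighbors N E v)).

Definition total_rate (N : nat) (g : nat -> R) (E : nat -> nat -> bool) : R :=
  sumL (node_rate N g E) (seq 1 N).

Lemma sum_rate_total N g E : sum_rate N g E = / (2 * (INR N - 1)) * total_rate N g E.
Proof. reflexivity. Qed.

Lemma in_neighbors N E v y : In y (neighbors N E v) <-> E v y = true /\ in_range N y.
Proof.
  unfold neighbors, in_range. rewrite filter_In, in_seq. split; intros [H1 H2]; split; auto; lia.
Qed.

Lemma node_rate_le N g E v y : E v y = true -> in_range N y -> node_rate N g E v <= phi g v y.
Proof.
  intros. unfold node_rate. apply min_list_le, in_map, in_neighbors. auto.
Qed.

Lemma node_rate_attained N g E v : (exists y, E v y = true /\ in_range N y) ->
  exists y, E v y = true /\ in_range N y /\ node_rate N g E v = phi g v y.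
Proof.
  intros [y0 Hy0]. unfold node_rate.
  assert (Hne : map (phi g v) (neighbors N E v) <> []).
  { intro H. apply map_eq_nil in H. apply in_neighbors in Hy0. rewrite H in Hy0. auto. }
  apply min_list_in, in_map_iff in Hne. destruct Hne as [y [H1 H2]].
  apply in_neighbors in H2. destruct H2 as [Hy Hyr].
  exists y. split; [exact Hy | split; [exact Hyr | auto]].
Qed.

Lemma node_rate_ge N g E v c : (exists y, E v y = true /\ in_range N y) ->
  (forall y, E v y = true -> in_range N y -> c <= phi g v y) -> c <= node_rate N g E v.
Proof.
  intros H1 H2. destruct (node_rate_attained N g E v H1) as [y (Ha & Hb & ->)]. auto.
Qed.

Lemma node_rate_leaf N g E v a : in_range N a -> leaf_at E v a -> node_rate N g E v = phi g v a.
Proof.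
  intros Ha Hva. apply Rle_antisym.
  - apply node_rate_le; auto. apply Hva; reflexivity.
  - apply node_rate_ge; [exists a; split; auto; apply Hva; auto|].
    intros y Hy _. apply Hva in Hy. subst. lra.
Qed.

Lemma node_rate_row_ext N g E E' v : (forall x, E' v x = E v x) ->
  node_rate N g E' v = node_rate N g E v.
Proof. intros H. unfold node_rate, neighbors. rewrite (filter_ext _ _ H). reflexivity. Qed.

Lemma node_rate_mono N g E E' v : (exists y, E' v y = true /\ in_range N y) ->
  (forall y, E' v y = true -> in_range N y ->
     exists x, E v x = true /\ in_range N x /\ phi g v x <= phi g v y) ->
  node_rate N g E v <= node_rate N g E' v.
Proof.
  intros H1 H2. destruct (node_rate_attained N g E' v H1) as [y (Ha & Hb & ->)].
  destruct (H2 y Ha Hb) as [x (Hx1 & Hx2 & Hx3)].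
  eapply Rle_trans; [apply node_rate_le; eauto | auto].
Qed.

Definition slack_at (S : list (nat * R)) (v : nat) : R :=
  fold_right (fun p acc => (if Nat.eqb (fst p) v then snd p else 0) + acc) 0 S.

Lemma slack_at_notin S v : ~ In v (map fst S) -> slack_at S v = 0.
Proof.
  induction S as [|[k c] S IH]; simpl; intros H; [reflexivity|].
  destruct (Nat.eqb_spec k v); [tauto|]. rewrite IH by tauto. lra.
Qed.

Lemma slack_at_in S p : NoDup (map fst S) -> In p S -> slack_at S (fst p) = snd p.
Proof.
  induction S as [|[k c] S IH]; simpl; intros Hnd Hp; [tauto|].
  inversion Hnd as [|? ? Hk HS]; subst.
  destruct Hp as [<-|Hp]; simpl.
  - rewrite Nat.eqb_refl, slack_at_notin by exact Hk. lra.
  - destruct (Nat.eqb_spec k (fst p)) as [->|_].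
    + exfalso. apply Hk, in_map, Hp.
    + rewrite IH; auto. lra.
Qed.

Lemma sumL_slack_at S l : NoDup l -> (forall p, In p S -> In (fst p) l) ->
  sumL (slack_at S) l = fold_right Rplus 0 (map snd S).
Proof.
  intros Hl. induction S as [|[k c] S IH]; simpl; intros HS.
  - clear Hl HS. induction l as [|x l IHl]; [reflexivity|].
    unfold sumL in *; simpl in *. rewrite IHl. lra.
  - change (sumL (fun v => (if Nat.eqb k v then c else 0) + slack_at S v) l =
            c + fold_right Rplus 0 (map snd S)).
    rewrite sumL_plus, sumL_single, IH; auto.
    apply (HS (k, c)). auto.
Qed.

Lemma total_rate_local_change N g E E' (S : list (nat * R)) :
  NoDup (map fst S) -> (forall p, In p S -> in_range N (fst p)) ->
  (forall p, In p S -> node_rate N g E (fst p) <= node_rate N g E' (fst p) + snd p) ->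
  (forall v, in_range N v -> ~ In v (map fst S) -> node_rate N g E v <= node_rate N g E' v) ->
  fold_right Rplus 0 (map snd S) <= 0 ->
  total_rate N g E <= total_rate N g E'.
Proof.
  intros Hnd Hrange Hslack Hrest Hsum. unfold total_rate.
  apply Rle_trans with (sumL (fun v => node_rate N g E' v + slack_at S v) (seq 1 N)).
  - apply sumL_le. intros v Hv.
    assert (Hvr : in_range N v) by (apply in_seq in Hv; unfold in_range; lia).
    destruct (in_dec Nat.eq_dec v (map fst S)) as [HvS|HvS].
    + apply in_map_iff in HvS. destruct HvS as [p [<- Hp]].
      rewrite slack_at_in; auto.
    + rewrite slack_at_notin by exact HvS. specialize (Hrest v Hvr HvS). lra.
  - rewrite sumL_plus, sumL_slack_at; [lra | apply seq_NoDup|].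
    intros p Hp. apply in_seq. specialize (Hrange p Hp). unfold in_range in Hrange. lia.
Qed.

Section ReattachRate.
Variables (N : nat) (g : nat -> R) (w a : nat) (E : nat -> nat -> bool).
Hypothesis HN : (2 <= N)%nat.
Hypothesis Hpos : forall i, in_range N i -> 0 < g i.
Hypothesis HT : spanning_tree N E.
Hypothesis Hwa : E w a = true.

Lemma reattach_rate_away v : in_range N v -> v <> w -> v <> a -> g a <= g w ->
  node_rate N g E v <= node_rate N g (reattach w a E) v.
Proof.
  intros Hv Hvw Hva Hg. pose proof (reattach_spanning_tree N w a E HT Hwa) as HT'.
  destruct HT as [[Hs [Hirr Hr]] _]. destruct (Hr _ _ Hwa) as [Hw Ha].
  apply node_rate_mono; [apply tree_neighbor; auto|].
  intros y Hy Hyr. apply reattach_edge in Hy.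
  destruct Hy as [[? _]|[[_ ?]|(_ & _ & _ & [H|[[? _]|[-> H]]])]]; try congruence.
  - exists y. split; [|split]; auto. lra.
  - exists w. split; [|split]; auto. apply phi_antitone; auto.
Qed.

Lemma reattach_rate_anchor : (forall x, E w x = true -> g x <= g w) ->
  node_rate N g E a <= node_rate N g (reattach w a E) a.
Proof.
  intros Hmax. pose proof (reattach_spanning_tree N w a E HT Hwa) as HT'.
  destruct HT as [[Hs [Hirr Hr]] _]. destruct (Hr _ _ Hwa) as [Hw Ha].
  pose proof (anchor_neq_leaf w a E Hwa Hirr) as Haw.
  apply node_rate_mono; [apply tree_neighbor; auto|].
  intros y Hy Hyr. apply reattach_edge in Hy.
  destruct Hy as [[? _]|[[-> _]|(_ & _ & Hay & [H|[[_ H]|[? _]]])]]; try congruence.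
  - exists w. rewrite Hs. split; [|split]; auto. lra.
  - exists y. split; [|split]; auto. lra.
  - exists w. rewrite Hs. split; [|split]; auto. apply phi_antitone; auto.
Qed.

Lemma reattach_rate_leaf : node_rate N g E w <= node_rate N g (reattach w a E) w.
Proof.
  destruct HT as [[_ [_ Hr]] _]. destruct (Hr _ _ Hwa) as [Hw Ha].
  rewrite (node_rate_leaf N g _ w a Ha (reattach_leaf w a E)).
  apply node_rate_le; auto.
Qed.

Lemma reattach_total_rate_mono : (forall x, E w x = true -> g x <= g w) ->
  total_rate N g E <= total_rate N g (reattach w a E).
Proof.
  intros Hmax. apply sumL_le. intros v Hv.
  assert (Hvr : in_range N v) by (apply in_seq in Hv; unfold in_range; lia).
  destruct (Nat.eq_dec v w) as [->|Hvw]; [apply reattach_rate_leaf|].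
  destruct (Nat.eq_dec v a) as [->|Hva]; [apply reattach_rate_anchor; auto|].
  apply reattach_rate_away; auto.
Qed.

End ReattachRate.

Section TopLeaves.
Variables (N : nat) (g : nat -> R).
Hypothesis HN : (3 <= N)%nat.
Hypothesis Hpos : forall i, (1 <= i <= N)%nat -> 0 < g i.
Hypothesis Hmono : forall i j, (1 <= i)%nat -> (i <= j)%nat -> (j <= N)%nat -> g i <= g j.

Local Notation M := (N - 1)%nat.

Lemma top_in_range : in_range N N.
Proof. unfold in_range; lia. Qed.

Lemma prev_in_range : in_range N M.
Proof. unfold in_range; lia. Qed.

Lemma gamma_pos x : in_range N x -> 0 < g x.
Proof. apply Hpos. Qed.

Lemma gamma_le_top x : in_range N x -> g x <= g N.
Proof. unfold in_range; intros; apply Hmono; lia. Qed.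

Lemma gamma_le_prev x : in_range N x -> x <> N -> g x <= g M.
Proof. unfold in_range; intros; apply Hmono; lia. Qed.

Lemma phi_le_node_rate E v u : spanning_tree N E -> in_range N v -> in_range N u ->
  (forall y, E v y = true -> in_range N y -> g y <= g u) -> phi g v u <= node_rate N g E v.
Proof.
  intros HT Hv Hu Hle. apply node_rate_ge; [apply tree_neighbor; auto; lia|].
  intros y Hy Hyr. apply phi_antitone; auto using gamma_pos.
Qed.

Lemma make_top_leaf E : spanning_tree N E ->
  exists a, in_range N a /\ spanning_tree N (reattach N a E) /\
    total_rate N g E <= total_rate N g (reattach N a E) /\ leaf_at (reattach N a E) N a.
Proof.
  intros HT. destruct (tree_neighbor N E N ltac:(lia) HT top_in_range) as [a [Ha Har]].
  exists a. split; [exact Har | split; [apply reattach_spanning_tree; auto | split]].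
  - apply reattach_total_rate_mono; auto; [lia|].
    intros x Hx. apply gamma_le_top. destruct HT as [[_ [_ Hr]] _]. apply (Hr _ _ Hx).
  - apply reattach_leaf.
Qed.

Lemma make_prev_leaf E a : spanning_tree N E -> in_range N a -> a <> M -> leaf_at E N a ->
  exists E' b, spanning_tree N E' /\ total_rate N g E <= total_rate N g E' /\
    in_range N b /\ leaf_at E' N a /\ leaf_at E' M b.
Proof.
  intros HT Ha HaM HNa. pose proof HT as [[Hs [Hirr Hr]] _].
  assert (HnotN : forall x, E M x = true -> x <> N).
  { intros x Hx ->. rewrite Hs in Hx. apply HNa in Hx. congruence. }
  destruct (tree_neighbor N E M ltac:(lia) HT prev_in_range) as [b [Hb Hbr]].
  exists (reattach M b E), b.
  split; [apply reattach_spanning_tree; auto|].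
  split; [|split; [exact Hbr | split]].
  - apply reattach_total_rate_mono; auto; [lia|].
    intros x Hx. apply gamma_le_prev; [apply (Hr _ _ Hx) | apply HnotN; auto].
  - apply reattach_keeps_leaf; auto; [lia | apply not_eq_sym, HnotN; auto].
  - apply reattach_leaf.
Qed.

Lemma hang_top_pair E : spanning_tree N E -> leaf_at E N M ->
  exists E' b, spanning_tree N E' /\ total_rate N g E <= total_rate N g E' /\
    in_range N b /\ leaf_at E' N b /\ leaf_at E' M b.
Proof.
  intros HT HNM. pose proof HT as [[Hs [Hirr Hr]] _].
  destruct (leaf_anchor_other_neighbor N E N M HN HT top_in_range HNM) as [b [Hb HbN]].
  assert (Hbr : in_range N b) by apply (Hr _ _ Hb).
  assert (HbM : b <> M) by (intros ->; congruence).
  assert (HMN : E M N = true) by (rewrite Hs; apply HNM; reflexivity).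
  pose proof (reattach_spanning_tree N M b E HT Hb) as HT'.
  assert (HN' : leaf_at (reattach M b E) N b)
    by (apply reattach_moves_leaf; auto; lia).
  exists (reattach M b E), b.
  split; [exact HT' | split; [| split; [exact Hbr | split; [exact HN' | apply reattach_leaf]]]].
  apply (total_rate_local_change N g E (reattach M b E)
           [(M, phi g M N - phi g M b); (b, phi g b M - phi g b N)]).
  - repeat constructor; simpl; intuition lia.
  - intros p [<-|[<-|[]]]; [apply prev_in_range | exact Hbr].
  - intros p [<-|[<-|[]]]; simpl.
    + rewrite (node_rate_leaf N g _ M b Hbr (reattach_leaf M b E)).
      pose proof (node_rate_le N g E M N HMN top_in_range). lra.
    + pose proof (node_rate_le N g E b M ltac:(rewrite Hs; auto) prev_in_range).
      assert (phi g b N <= node_rate N g (reattach M b E) b); [|lra].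
      apply phi_le_node_rate; auto using top_in_range, gamma_le_top.
  - intros v Hv Hnot. simpl in Hnot.
    apply reattach_rate_away; auto; try lia. apply gamma_le_prev; auto.
  - simpl. pose proof (phi_reattach_balance g M N b).
    pose proof (gamma_le_prev b Hbr HbN). pose proof (gamma_le_top M prev_in_range).
    pose proof (Hpos b Hbr). lra.
Qed.

Lemma top_leaves_distinct E i j : spanning_tree N E -> i <> M ->
  leaf_at E N i -> leaf_at E M j -> i <> N /\ j <> M /\ j <> N.
Proof.
  intros [[Hs [Hirr _]] _] HiM HNi HMj. split; [|split].
  - intros ->. specialize (proj2 (HNi N) eq_refl). congruence.
  - intros ->. specialize (proj2 (HMj M) eq_refl). congruence.
  - intros ->. assert (H : E N M = true) by (rewrite Hs; apply HMj; reflexivity).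
    apply HNi in H. congruence.
Qed.

Lemma swap_top_leaves E i j : spanning_tree N E -> in_range N i -> in_range N j -> i <> M ->
  leaf_at E N i -> leaf_at E M j -> g i < g j ->
  let E' := relabel (transpose N M) E in
  spanning_tree N E' /\ total_rate N g E <= total_rate N g E' /\ leaf_at E' N j /\ leaf_at E' M i.
Proof.
  intros HT Hi Hj HiM HNi HMj Hlt E'. pose proof HT as [[Hs [Hirr Hr]] _].
  destruct (top_leaves_distinct E i j HT HiM HNi HMj) as (HiN & HjM & HjN).
  assert (Hij : i <> j) by (intros ->; lra).
  assert (HMN : M <> N) by lia.
  assert (Hss := transpose_involutive N M).
  assert (HT' : spanning_tree N E').
  { apply relabel_spanning_tree; auto.
    intros; apply transpose_in_range; auto using top_in_range, prev_in_range. }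
  assert (HNj : leaf_at E' N j)
    by (apply relabel_leaf with M; auto; [apply transpose_l | apply transpose_other; auto]).
  assert (HMi : leaf_at E' M i)
    by (apply relabel_leaf with N; auto; [apply transpose_r | apply transpose_other; auto]).
  split; [exact HT' | split; [| split; assumption]].
  apply (total_rate_local_change N g E E'
    [(N, phi g N i - phi g N j); (M, phi g M j - phi g M i);
     (i, phi g i N - phi g i M); (j, phi g j M - phi g j N)]).
  - repeat constructor; simpl; intuition lia.
  - intros p [<-|[<-|[<-|[<-|[]]]]]; auto using top_in_range, prev_in_range.
  - intros p [<-|[<-|[<-|[<-|[]]]]]; simpl.
    + rewrite (node_rate_leaf N g E N i Hi HNi), (node_rate_leaf N g _ N j Hj HNj). lra.
    + rewrite (node_rate_leaf N g E M j Hj HMj), (node_rate_leaf N g _ M i Hi HMi). lra.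
    + pose proof (node_rate_le N g E i N ltac:(rewrite Hs; apply HNi; auto) top_in_range).
      assert (phi g i M <= node_rate N g E' i); [|lra].
      apply phi_le_node_rate; auto using prev_in_range.
      intros y Hy Hyr. apply gamma_le_prev; auto. intros ->.
      unfold E', relabel in Hy. rewrite (transpose_other N M i), transpose_l in Hy by auto.
      rewrite (leaf_nonadjacent E M j i Hs HMj Hij) in Hy. discriminate.
    + pose proof (node_rate_le N g E j M ltac:(rewrite Hs; apply HMj; auto) prev_in_range).
      assert (phi g j N <= node_rate N g E' j); [|lra].
      apply phi_le_node_rate; auto using top_in_range, gamma_le_top.
  - intros v Hv Hnot. simpl in Hnot.
    assert (Hvi : v <> i) by (intros ->; apply Hnot; auto 6).
    assert (Hvj : v <> j) by (intros ->; apply Hnot; auto 6).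
    rewrite (node_rate_row_ext N g E E' v); [lra|].
    intro x. apply transpose_row_away.
    + intros ->. apply Hnot. auto.
    + intros ->. apply Hnot. auto.
    + exact (leaf_nonadjacent E N i v Hs HNi Hvi).
    + exact (leaf_nonadjacent E M j v Hs HMj Hvj).
  - simpl. pose proof (phi_swap_balance g N M i j).
    pose proof (gamma_le_prev j Hj HjN). pose proof (gamma_le_top M prev_in_range).
    pose proof (Hpos i Hi). lra.
Qed.

Lemma order_top_leaves E i j : spanning_tree N E -> in_range N i -> in_range N j -> i <> M ->
  leaf_at E N i -> leaf_at E M j ->
  exists E' i' j', spanning_tree N E' /\ total_rate N g E <= total_rate N g E' /\
    in_range N i' /\ in_range N j' /\ leaf_at E' N i' /\ leaf_at E' M j' /\ g j' <= g i'.
Proof.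
  intros HT Hi Hj HiM HNi HMj.
  destruct (Rle_dec (g j) (g i)) as [Hle|Hlt].
  - exists E, i, j. split; [exact HT | split; [lra | repeat (split; [assumption|]); exact Hle]].
  - apply Rnot_le_lt in Hlt.
    destruct (swap_top_leaves E i j HT Hi Hj HiM HNi HMj Hlt) as (HT' & Hle & HNj & HMi).
    exists (relabel (transpose N M) E), j, i.
    split; [exact HT' | split; [exact Hle | repeat (split; [assumption|]); lra]].
Qed.

Lemma top_leaves_improvement E0 : spanning_tree N E0 ->
  exists E i j, spanning_tree N E /\ total_rate N g E0 <= total_rate N g E /\
    in_range N i /\ in_range N j /\ leaf_at E N i /\ leaf_at E M j /\ g j <= g i.
Proof.
  intros HT0.
  destruct (make_top_leaf E0 HT0) as (a & Ha & HT1 & Hle1 & HNa).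
  destruct (Nat.eq_dec a M) as [->|HaM].
  - destruct (hang_top_pair _ HT1 HNa) as (E2 & b & HT2 & Hle2 & Hb & HNb & HMb).
    exists E2, b, b. split; [exact HT2 | split; [lra | repeat (split; [assumption|]); lra]].
  - destruct (make_prev_leaf _ a HT1 Ha HaM HNa) as (E2 & b & HT2 & Hle2 & Hb & HNa2 & HMb).
    destruct (order_top_leaves E2 a b HT2 Ha Hb HaM HNa2 HMb)
      as (E3 & i & j & HT3 & Hle3 & Hi & Hj & HNi & HMj & Hg).
    exists E3, i, j. split; [assumption | split; [lra | repeat (split; [assumption|]); assumption]].
Qed.

End TopLeaves.

Theorem lemma4 (N : nat) (gamma : nat -> R)
  (HN : (3 <= N)%nat)
  (Hpos : forall i, (1 <= i <= N)%nat -> 0 < gamma i)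
  (Hmono : forall i j, (1 <= i)%nat -> (i <= j)%nat -> (j <= N)%nat -> gamma i <= gamma j) :
  exists E : nat -> nat -> bool,
    sum_rate_optimal N gamma E /\
    degree N E N = 1%nat /\
    degree N E (N - 1) = 1%nat /\
    (forall i j, E N i = true -> E (N - 1)%nat j = true -> gamma j <= gamma i).
Proof.
  destruct (spanning_tree_maximum N (total_rate N gamma)) as [E0 [HT0 Hopt]]; [lia|].
  destruct (top_leaves_improvement N gamma HN Hpos Hmono E0 HT0)
    as (E & i & j & HT & Hle & Hi & Hj & HNi & HMj & Hg).
  exists E. split; [split; [exact HT|] | split; [|split]].
  - intros E' HT'. rewrite !sum_rate_total. apply Rmult_le_compat_l.
    + left. apply Rinv_0_lt_compat.
      assert (3 <= INR N) by (replace 3 with (INR 3) by (simpl; lra); apply le_INR; lia).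
      lra.
    + specialize (Hopt E' HT'). lra.
  - apply (degree_leaf N E N i); auto.
  - apply (degree_leaf N E (N - 1) j); auto.
  - intros i' j' Hi' Hj'. apply HNi in Hi'. apply HMj in Hj'. subst. exact Hg.
Qed.
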